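(* Let $a\in\mathbb{R}$, $\beta,\eta,\nu>0$ with $\eta^2<2\beta\nu$, $\mu=\eta/\nu$, $\sigma=2\beta/\nu$, and $p\in[1-\beta,1]$. Consider the quantile problem $$\sup_{q\ge a,\,f}\ q\quad\text{s.t.}\quad (1-\beta)+\int_a^q f(x)dx=p,\ \int_a^\infty f(x)dx=\beta,\ f(a)=f(a+)=\eta,\ f'_+(a)\ge-\nu,\ f\text{ convex on }[a,\infty),\ f\ge0\text{ on }[a,\infty).$$ Let $z^*(a,b)$ be the optimal value of the problem $\sup_f\int_b^\infty f(x)dx$ subject to the last five constraints above, and define $q^*=\inf\{b\ge a: z^*(a,b)=1-p\}$ (with $\inf\emptyset=\infty$). Then $q^*$ equals the optimal value of the quantile problem, and $$q^*=\begin{cases}a+\mu-\sqrt{\mu^2-\sigma+\frac{2(1-p)}{\nu}}&\text{if }1-\beta\le p\le1-\beta+\frac{\eta^2}{2\nu},\\ \infty&\text{if }p>1-\beta+\frac{\eta^2}{2\nu}.\end{cases}$$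
   Context: $f(a+)$ denotes the right limit of $f$ at $a$ and $f'_+$ the right derivative. The first constraint encodes that the distribution function equals $1-\beta$ at $a$ and equals $p$ at $q$, i.e. $q$ is the $p$-quantile. *)

From Stdlib Require Import Reals.
From Coquelicot Require Import Coquelicot.
Open Scope R_scope.

Definition convex_on_from (f : R -> R) (a : R) : Prop :=
  forall x y t, a <= x -> a <= y -> 0 <= t <= 1 ->
    f (t * x + (1 - t) * y) <= t * f x + (1 - t) * f y.

Definition feasible (a beta eta nu : R) (f : R -> R) : Prop :=
  is_RInt_gen f (at_point a) (Rbar_locally p_infty) beta /\
  f a = eta /\
  filterlim f (at_right a) (locally eta) /\
  (exists d, filterlim (fun x => (f x - f a) / (x - a)) (at_right a) (locally d)
             /\ - nu <= d) /\
  convex_on_from f a /\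
  (forall x, a <= x -> 0 <= f x).

Definition quantile_value (a beta eta nu p : R) : Rbar :=
  Lub_Rbar (fun q => a <= q /\ exists f, feasible a beta eta nu f /\
                       is_RInt f a q (p - (1 - beta))).

Definition zstar (a beta eta nu b : R) : Rbar :=
  Lub_Rbar (fun v => exists f, feasible a beta eta nu f /\
                       is_RInt_gen f (at_point b) (Rbar_locally p_infty) v).

Definition qstar (a beta eta nu p : R) : Rbar :=
  Glb_Rbar (fun b => a <= b /\ zstar a beta eta nu b = Finite (1 - p)).

From Stdlib Require Import Reals Lra Psatz.
From Coquelicot Require Import Coquelicot.
Open Scope R_scope.

(* A feasible f is convex and nonnegative on [a, +oo), starts at (a, eta) with right
   slope at least -nu, and has total mass beta.  Convexity keeps f above its tangent
   eta - nu (x - a), and finite mass forces f to be nonincreasing.  Hence the mass of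
   f on [a, b] is at least the area under the tangent, affine_area eta nu (b - a),
   as long as b precedes the zero a + eta / nu of the tangent, and at least
   eta^2 / (2 nu) beyond it.  Conversely, convex polylines (the maximum of 0 and three
   affine pieces) with tuned slopes attain or approach these bounds, and can also
   place any mass above eta^2 / (2 nu) arbitrarily far to the right. *)

(* Area between the axis and the line y0 - k * (x - x0) over [x0, x0 + t]. *)
Definition affine_area (y0 k t : R) : R := y0 * t - k * t ^ 2 / 2.

Lemma affine_area_vertex (eta nu : R) : 0 < nu ->
  affine_area eta nu (eta / nu) = eta ^ 2 / (2 * nu).
Proof. intros Hn. unfold affine_area. field. lra. Qed.

Lemma affine_area_increasing (eta nu x y : R) : 0 < nu -> 0 <= x -> x < y -> y <= eta / nu ->
  affine_area eta nu x < affine_area eta nu y.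
Proof.
intros Hn Hx Hxy Hy. unfold affine_area.
assert (nu * y <= eta).
{ apply (Rmult_le_compat_l nu) in Hy; [|lra].
  replace (nu * (eta / nu)) with eta in Hy by (field; lra). lra. }
assert (0 < (y - x) * (eta - nu * (x + y) / 2)) by (apply Rmult_lt_0_compat; nra).
replace (eta * y - nu * y ^ 2 / 2 - (eta * x - nu * x ^ 2 / 2)) with ((y - x) * (eta - nu * (x + y) / 2))
  in * by field.
lra.
Qed.

Lemma affine_area_le_vertex (eta nu x : R) : 0 < nu -> affine_area eta nu x <= eta ^ 2 / (2 * nu).
Proof.
intros Hn. unfold affine_area.
assert (0 <= (eta - nu * x) ^ 2 / (2 * nu)) by (apply Rdiv_le_0_compat; [apply pow2_ge_0 | lra]).
replace (eta ^ 2 / (2 * nu)) with (eta * x - nu * x ^ 2 / 2 + (eta - nu * x) ^ 2 / (2 * nu))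
  by (field; lra).
lra.
Qed.

Lemma is_RInt_gen_partial (f : R -> R) (u l : R) :
  is_RInt_gen f (at_point u) (Rbar_locally p_infty) l ->
  forall eps : posreal, exists M, forall B, M < B ->
    exists I, is_RInt f u B I /\ Rabs (I - l) < eps.
Proof.
intros H eps. destruct (H (ball l eps) (locally_ball l eps)) as [Q P HQ [M HM] HP].
exists M. intros B HB. destruct (HP u B HQ (HM B HB)) as [I [HI Hball]].
now exists I.
Qed.

Lemma is_RInt_gen_uniq (f : R -> R) (u l l' : R) :
  is_RInt_gen f (at_point u) (Rbar_locally p_infty) l ->
  is_RInt_gen f (at_point u) (Rbar_locally p_infty) l' -> l = l'.
Proof.
intros H H'. rewrite <- (is_RInt_gen_unique _ _ H). exact (is_RInt_gen_unique _ _ H').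
Qed.

Lemma is_RInt_const_R (c u B : R) : is_RInt (fun _ => c) u B (c * (B - u)).
Proof.
pose proof (is_RInt_const u B c) as K. rewrite Rmult_comm. exact K.
Qed.

Lemma is_RInt_gen_zero_tail (f : R -> R) (L : R) : (forall x, L <= x -> f x = 0) ->
  is_RInt_gen f (at_point L) (Rbar_locally p_infty) 0.
Proof.
intros H P HP. apply Filter_prod with (fun x => x = L) (fun x => L < x).
- reflexivity.
- now exists L.
- intros x y -> Hy. simpl in *. exists 0. split.
  + apply is_RInt_ext with (fun _ => 0).
    * intros z Hz. rewrite Rmin_left in Hz by lra. symmetry; apply H; lra.
    * pose proof (is_RInt_const_R 0 L y) as K. rewrite Rmult_0_l in K. exact K.
  + apply locally_singleton. exact HP.
Qed.

Lemma is_RInt_gen_tail (f : R -> R) (a b l I : R) :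
  is_RInt_gen f (at_point a) (Rbar_locally p_infty) l -> is_RInt f a b I ->
  is_RInt_gen f (at_point b) (Rbar_locally p_infty) (l - I).
Proof.
intros H HI.
assert (Hba : is_RInt_gen f (at_point b) (at_point a) (opp I)).
{ apply (is_RInt_gen_at_point (V := R_NormedModule)), (is_RInt_swap (V := R_NormedModule)), HI. }
pose proof (is_RInt_gen_Chasles f a _ _ Hba H) as K.
replace (l - I) with (plus (opp I) l) by (unfold plus, opp; simpl; ring). exact K.
Qed.

Lemma is_RInt_ge_const (f : R -> R) (u B c I : R) : u <= B -> is_RInt f u B I ->
  (forall x, u < x < B -> c <= f x) -> c * (B - u) <= I.
Proof. intros HB HI H. exact (is_RInt_le _ f u B _ _ HB (is_RInt_const_R c u B) HI H). Qed.

Lemma is_RInt_le_const (f : R -> R) (u B c I : R) : u <= B -> is_RInt f u B I ->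
  (forall x, u < x < B -> f x <= c) -> I <= c * (B - u).
Proof. intros HB HI H. exact (is_RInt_le f _ u B _ _ HB HI (is_RInt_const_R c u B) H). Qed.

Lemma is_RInt_affine (y0 k x0 x1 : R) :
  is_RInt (fun x => y0 - k * (x - x0)) x0 x1 (affine_area y0 k (x1 - x0)).
Proof.
set (F := fun x => y0 * (x - x0) - k * (x - x0) ^ 2 / 2).
assert (H : is_RInt (fun x => y0 - k * (x - x0)) x0 x1 (minus (F x1) (F x0))).
{ apply (is_RInt_derive (V := R_CompleteNormedModule) F).
  - intros x _. unfold F. auto_derive; [easy | field].
  - intros x _. apply (ex_derive_continuous (K := R_AbsRing) (V := R_NormedModule)).
    auto_derive. easy. }
unfold minus, plus, opp in H; simpl in H.
replace (affine_area y0 k (x1 - x0)) with (F x1 + - F x0) by (unfold F, affine_area; cbv beta; field).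
exact H.
Qed.

Lemma is_RInt_split (f : R -> R) (u y B I : R) : u <= y <= B -> is_RInt f u B I ->
  exists I1, is_RInt f u y I1 /\ is_RInt f y B (I - I1).
Proof.
intros Hy HI.
assert (E : ex_RInt f u y) by (apply (ex_RInt_Chasles_1 (V := R_CompleteNormedModule)) with B; [lra | now exists I]).
destruct E as [I1 HI1]. exists I1. split; [exact HI1|].
pose proof (is_RInt_Chasles f y u B _ _ (is_RInt_swap (V := R_NormedModule) _ _ _ _ HI1) HI) as K.
replace (I - I1) with (plus (opp I1) I) by (unfold plus, opp; simpl; ring). exact K.
Qed.

Lemma is_RInt_le_after_prefix (f : R -> R) (u y b m v I : R) : u <= y <= b ->
  is_RInt f u y m -> (forall x, y <= x -> f x <= v) -> is_RInt f u b I ->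
  I <= m + v * (b - y).
Proof.
intros Hy Hm Hv HI.
destruct (is_RInt_split f u y b I Hy HI) as [I1 [HI1 HI2]].
assert (I1 = m) by (rewrite <- (is_RInt_unique _ _ _ _ HI1); exact (is_RInt_unique _ _ _ _ Hm)).
assert (I - I1 <= v * (b - y)) by (apply (is_RInt_le_const f y b); auto; [lra | intros; apply Hv; lra]).
lra.
Qed.

Lemma is_lub_Rbar_approx (E : R -> Prop) (x : R) : (forall y, E y -> y <= x) ->
  (forall eps, 0 < eps -> exists y, E y /\ x - eps <= y) -> is_lub_Rbar E x.
Proof.
intros Hub Happ. split.
- intros y Hy. exact (Hub y Hy).
- intros [u| |] Hu; simpl; auto.
  + apply Rle_plus_epsilon. intros eps Heps. destruct (Happ eps Heps) as [y [Hy Hxy]].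
    specialize (Hu y Hy). simpl in Hu. lra.
  + destruct (Happ 1 Rlt_0_1) as [y [Hy _]]. exact (Hu y Hy).
Qed.

Lemma is_lub_Rbar_unbounded (E : R -> Prop) : (forall N, exists y, E y /\ N <= y) ->
  is_lub_Rbar E p_infty.
Proof.
intros Hunb. split; [intros y _; exact I|].
intros [u| |] Hu; simpl; auto.
- destruct (Hunb (u + 1)) as [y [Hy Huy]]. specialize (Hu y Hy). simpl in Hu. lra.
- destruct (Hunb 0) as [y [Hy _]]. exact (Hu y Hy).
Qed.

Lemma convex_slope_mono (g : R -> R) (a x y : R) : convex_on_from g a -> a < y <= x ->
  (g y - g a) / (y - a) <= (g x - g a) / (x - a).
Proof.
intros Hconv [Hy Hyx].
set (t := (y - a) / (x - a)).
assert (Ht : 0 <= t <= 1).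
{ unfold t. split; [apply Rdiv_le_0_compat; lra|].
  apply (Rmult_le_reg_r (x - a)); [lra|]. field_simplify; lra. }
pose proof (Hconv x a t ltac:(lra) (Rle_refl a) Ht) as C.
replace (t * x + (1 - t) * a) with y in C by (unfold t; field; lra).
apply (Rmult_le_reg_r (y - a)); [lra|].
replace ((g y - g a) / (y - a) * (y - a)) with (g y - g a) by (field; lra).
replace ((g x - g a) / (x - a) * (y - a)) with (t * (g x - g a)) by (unfold t; field; lra).
lra.
Qed.

Lemma convex_increase_persists (g : R -> R) (a x y z : R) : convex_on_from g a ->
  a <= x < y -> y <= z -> g x < g y -> g y <= g z.
Proof.
intros Hconv [Hx Hxy] Hyz Hlt. destruct (Req_dec z y) as [->|Hzy]; [lra|].
set (t := (y - x) / (z - x)).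
assert (Ht : 0 < t <= 1).
{ unfold t. split; [apply Rdiv_lt_0_compat; lra|].
  apply (Rmult_le_reg_r (z - x)); [lra|]. field_simplify; lra. }
pose proof (Hconv z x t ltac:(lra) Hx ltac:(lra)) as C.
replace (t * z + (1 - t) * x) with y in C by (unfold t; field; lra).
nra.
Qed.

Section Feasible.
Variables (a beta eta nu : R) (f : R -> R).
Hypothesis Hf : feasible a beta eta nu f.

(* A feasible function lies above the line eta - nu (x - a): its chord slopes from a
   dominate its right derivative, which is at least -nu. *)
Lemma feasible_above_tangent (x : R) : a <= x -> eta - nu * (x - a) <= f x.
Proof.
destruct Hf as [_ [Ha [_ [[d [Hd Hdn]] [Hconv _]]]]].
intros Hx. destruct (Req_dec x a) as [->|Hxa]; [rewrite Ha; lra|].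
set (slope := fun y => (f y - f a) / (y - a)) in Hd.
assert (Hds : d <= slope x).
{ apply (filterlim_le (F := at_right a) slope (fun _ => slope x) d (slope x));
    [| exact Hd | apply filterlim_const].
  exists (mkposreal (x - a) ltac:(lra)). intros y Hy Hay.
  apply Rabs_lt_between' in Hy. simpl in Hy.
  apply (convex_slope_mono f a x y Hconv). lra. }
assert (E : f x = f a + slope x * (x - a)) by (unfold slope; field; lra).
rewrite E, Ha. nra.
Qed.

Lemma feasible_integrable (b : R) : a <= b -> exists I, is_RInt f a b I.
Proof.
intros Hab. destruct Hf as [Hint _].
destruct (is_RInt_gen_partial _ _ _ Hint (mkposreal 1 Rlt_0_1)) as [M HM].
destruct (HM (Rmax M b + 1)) as [I [HI _]]; [generalize (Rmax_l M b); lra|].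
destruct (is_RInt_split f a b (Rmax M b + 1) I ltac:(generalize (Rmax_r M b); lra) HI) as [I1 [H1 _]].
now exists I1.
Qed.

(* A nonnegative convex function with finite mass is nonincreasing: an increase
   would persist and make the tail mass infinite. *)
Lemma feasible_nonincreasing (x y : R) : a <= x -> x <= y -> f y <= f x.
Proof.
destruct Hf as [Hint [_ [_ [_ [Hconv Hpos]]]]].
intros Hx Hxy. destruct (Rle_dec (f y) (f x)) as [?|Hc]; [assumption|]. exfalso.
assert (Hxy' : x < y) by (destruct (Req_dec x y) as [->|]; lra).
assert (Hstay : forall z, y <= z -> f y <= f z).
{ intros z Hz. apply (convex_increase_persists f a x y z Hconv); lra. }
assert (Hfy : 0 < f y) by (generalize (Hpos x Hx); lra).
destruct (is_RInt_gen_partial _ _ _ Hint (mkposreal 1 Rlt_0_1)) as [M HM].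
set (B := Rmax M y + (Rabs beta + 1) / f y + 1).
assert (HBy : y <= B /\ Rmax M y < B).
{ assert (0 < (Rabs beta + 1) / f y) by (apply Rdiv_lt_0_compat; [pose proof (Rabs_pos beta) |]; lra).
  pose proof (Rmax_r M y). unfold B. lra. }
destruct (HM B) as [I [HI Hclose]]; [generalize (Rmax_l M y); lra|].
simpl in Hclose. apply Rabs_def2 in Hclose.
destruct (is_RInt_split f a y B I ltac:(lra) HI) as [I1 [H1 H2]].
assert (Head : 0 * (y - a) <= I1) by (apply (is_RInt_ge_const f a y 0 I1); auto; [lra | intros; apply Hpos; lra]).
assert (Tail : f y * (B - y) <= I - I1) by (apply (is_RInt_ge_const f y B); auto; [lra | intros; apply Hstay; lra]).
assert (Big : Rabs beta + 1 < f y * (B - y)).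
{ assert (E : B - y = (Rmax M y - y) + (Rabs beta + 1) / f y + 1) by (unfold B; ring).
  assert (f y * ((Rabs beta + 1) / f y) = Rabs beta + 1) by (field; lra).
  rewrite E. pose proof (Rmax_r M y). nra. }
pose proof (Rle_abs beta). lra.
Qed.

Lemma feasible_mass_ge_tangent (b I : R) : a <= b -> is_RInt f a b I ->
  affine_area eta nu (b - a) <= I.
Proof.
intros Hab HI. apply (is_RInt_le _ f a b _ _ Hab (is_RInt_affine eta nu a b) HI).
intros x Hx. apply feasible_above_tangent. lra.
Qed.

Hypotheses (He : 0 < eta) (Hn : 0 < nu).

Lemma feasible_mass_to_vertex (I : R) : is_RInt f a (a + eta / nu) I -> eta ^ 2 / (2 * nu) <= I.
Proof.
intros HI. assert (0 < eta / nu) by (apply Rdiv_lt_0_compat; lra).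
rewrite <- (affine_area_vertex eta nu Hn). replace (eta / nu) with (a + eta / nu - a) at 1 by ring.
apply (feasible_mass_ge_tangent (a + eta / nu) I); [lra | exact HI].
Qed.

Lemma feasible_mass_ge_vertex (b I : R) : a + eta / nu <= b -> is_RInt f a b I ->
  eta ^ 2 / (2 * nu) <= I.
Proof.
intros Hab HI.
assert (Hmu : 0 < eta / nu) by (apply Rdiv_lt_0_compat; lra).
destruct (is_RInt_split f a (a + eta / nu) b I ltac:(lra) HI) as [I1 [H1 H2]].
pose proof (feasible_mass_to_vertex I1 H1) as L1.
destruct Hf as [_ [_ [_ [_ [_ Hpos]]]]].
assert (0 * (b - (a + eta / nu)) <= I - I1)
  by (apply (is_RInt_ge_const f (a + eta / nu) b); auto; intros; apply Hpos; lra).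
lra.
Qed.

(* Strictly beyond that point the bound is strict unless the whole mass beta is
   already reached: otherwise f is positive at q and adds mass on [a + eta/nu, q]. *)
Lemma feasible_mass_gt_vertex (q I : R) : a + eta / nu < q -> is_RInt f a q I -> I <> beta ->
  eta ^ 2 / (2 * nu) < I.
Proof.
intros Hq HI Hne.
assert (Hmu : 0 < eta / nu) by (apply Rdiv_lt_0_compat; lra).
pose proof Hf as [Hint [_ [_ [_ [_ Hpos]]]]].
assert (Hfq : 0 < f q).
{ destruct (Rlt_dec 0 (f q)) as [?|Hc]; [assumption|]. exfalso.
  assert (Z : forall z, q <= z -> f z = 0).
  { intros z Hz. generalize (feasible_nonincreasing q z ltac:(lra) Hz) (Hpos z ltac:(lra)). lra. }
  pose proof (is_RInt_gen_uniq f q _ _ (is_RInt_gen_zero_tail f q Z)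
    (is_RInt_gen_tail f a q beta I Hint HI)). lra. }
destruct (is_RInt_split f a (a + eta / nu) q I ltac:(lra) HI) as [I1 [H1 H2]].
pose proof (feasible_mass_to_vertex I1 H1) as L1.
assert (f q * (q - (a + eta / nu)) <= I - I1).
{ apply (is_RInt_ge_const f (a + eta / nu) q); auto; [lra|].
  intros; apply feasible_nonincreasing; lra. }
assert (0 < f q * (q - (a + eta / nu))) by (apply Rmult_lt_0_compat; lra).
lra.
Qed.

End Feasible.

Definition convex_R (g : R -> R) : Prop := forall x y t, 0 <= t <= 1 ->
  g (t * x + (1 - t) * y) <= t * g x + (1 - t) * g y.

Lemma convex_R_affine (c k x0 : R) : convex_R (fun x => c - k * (x - x0)).
Proof. intros x y t _. apply Req_le. ring. Qed.

Lemma convex_R_max (g h : R -> R) : convex_R g -> convex_R h ->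
  convex_R (fun x => Rmax (g x) (h x)).
Proof.
intros Hg Hh x y t Ht. apply Rmax_lub.
- eapply Rle_trans; [apply Hg; exact Ht|].
  apply Rplus_le_compat; apply Rmult_le_compat_l; try lra; apply Rmax_l.
- eapply Rle_trans; [apply Hh; exact Ht|].
  apply Rplus_le_compat; apply Rmult_le_compat_l; try lra; apply Rmax_r.
Qed.

Section Polyline.
Variables (a eta nu c s q r : R).
Hypotheses (Hac : a < c) (Hcq : c <= q) (Hr : 0 < r) (Hrs : r <= s) (Hsn : s <= nu).

Let v := eta - nu * (c - a).
Let w := v - s * (q - c).
Hypothesis Hw : 0 <= w.
Let L := q + w / r.

(* The convex polyline starting at (a, eta) with slope -nu on [a, c], -s on [c, q],
   -r on [q, L] and vanishing afterwards; all extremal examples are of this form. *)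
Definition polyline (x : R) : R :=
  Rmax 0 (Rmax (eta - nu * (x - a)) (Rmax (v - s * (x - c)) (w - r * (x - q)))).

Let q_le_L : q <= L.
Proof. unfold L. assert (0 <= w / r) by (apply Rdiv_le_0_compat; lra). lra. Qed.

Let L_spec : r * (L - q) = w.
Proof. unfold L. field. lra. Qed.

Let piece12 x : (eta - nu * (x - a)) - (v - s * (x - c)) = (nu - s) * (c - x).
Proof. unfold v. ring. Qed.

Let piece23 x : (v - s * (x - c)) - (w - r * (x - q)) = (s - r) * (q - x).
Proof. unfold w. ring. Qed.

Lemma polyline_first (x : R) : a <= x <= c -> polyline x = eta - nu * (x - a).
Proof.
intros Hx. unfold polyline. pose proof (piece12 x). pose proof (piece23 x).
assert (0 <= (nu - s) * (c - x)) by (apply Rmult_le_pos; lra).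
assert (0 <= (s - r) * (q - x)) by (apply Rmult_le_pos; lra).
assert (eta - nu * (x - a) = w + s * (q - c) + nu * (c - x)) by (unfold w, v; ring).
assert (0 <= s * (q - c)) by (apply Rmult_le_pos; lra).
assert (0 <= nu * (c - x)) by (apply Rmult_le_pos; lra).
rewrite (Rmax_left (v - s * (x - c))), (Rmax_left (eta - nu * (x - a))), Rmax_right; lra.
Qed.

Lemma polyline_second (x : R) : c <= x <= q -> polyline x = v - s * (x - c).
Proof.
intros Hx. unfold polyline. pose proof (piece12 x). pose proof (piece23 x).
assert (0 <= (nu - s) * (x - c)) by (apply Rmult_le_pos; lra).
assert (0 <= (s - r) * (q - x)) by (apply Rmult_le_pos; lra).
assert (v - s * (x - c) = w + s * (q - x)) by (unfold w; ring).
assert (0 <= s * (q - x)) by (apply Rmult_le_pos; lra).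
rewrite (Rmax_left (v - s * (x - c))), (Rmax_right (eta - nu * (x - a))), Rmax_right; lra.
Qed.

Lemma polyline_third (x : R) : q <= x <= L -> polyline x = w - r * (x - q).
Proof.
intros Hx. unfold polyline. pose proof (piece12 x). pose proof (piece23 x).
assert (0 <= (nu - s) * (x - c)) by (apply Rmult_le_pos; lra).
assert (0 <= (s - r) * (x - q)) by (apply Rmult_le_pos; lra).
assert (0 <= r * (L - x)) by (apply Rmult_le_pos; lra).
rewrite (Rmax_right (v - s * (x - c))), (Rmax_right (eta - nu * (x - a))), Rmax_right; lra.
Qed.

Lemma polyline_after (x : R) : L <= x -> polyline x = 0.
Proof.
intros Hx. unfold polyline. pose proof (piece12 x). pose proof (piece23 x).
assert (0 <= (nu - s) * (x - c)) by (apply Rmult_le_pos; lra).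
assert (0 <= (s - r) * (x - q)) by (apply Rmult_le_pos; lra).
assert (0 <= r * (x - L)) by (apply Rmult_le_pos; lra).
rewrite (Rmax_right (v - s * (x - c))), (Rmax_right (eta - nu * (x - a))), Rmax_left; lra.
Qed.

Lemma polyline_le_kink (x : R) : c <= x -> polyline x <= v.
Proof.
intros Hx.
assert (0 <= s * (q - c)) by (apply Rmult_le_pos; lra).
destruct (Rle_dec x q).
{ rewrite polyline_second by lra. assert (0 <= s * (x - c)) by (apply Rmult_le_pos; lra). lra. }
destruct (Rle_dec x L).
{ rewrite polyline_third by lra. assert (0 <= r * (x - q)) by (apply Rmult_le_pos; lra).
  unfold w in *. lra. }
rewrite polyline_after by lra. unfold w in *. lra.
Qed.

Definition polyline_head_mass : R := affine_area eta nu (c - a) + affine_area v s (q - c).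

Lemma polyline_head_integral : is_RInt polyline a q polyline_head_mass.
Proof.
apply (is_RInt_Chasles (V := R_NormedModule) polyline a c q).
- apply is_RInt_ext with (fun x => eta - nu * (x - a)); [|apply is_RInt_affine].
  intros x Hx. rewrite Rmin_left, Rmax_right in Hx by lra. rewrite polyline_first by lra. reflexivity.
- apply is_RInt_ext with (fun x => v - s * (x - c)); [|apply is_RInt_affine].
  intros x Hx. rewrite Rmin_left, Rmax_right in Hx by lra. rewrite polyline_second by lra. reflexivity.
Qed.

(* With total mass beta (the last piece contributes the triangle w^2 / (2 r)), the
   polyline has improper integral beta on [a, +oo). *)
Lemma polyline_total_mass (beta : R) : polyline_head_mass + w ^ 2 / (2 * r) = beta ->
  is_RInt_gen polyline (at_point a) (Rbar_locally p_infty) beta.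
Proof.
intros Htot.
assert (Hlast : is_RInt polyline q L (affine_area w r (L - q))).
{ apply is_RInt_ext with (fun x => w - r * (x - q)); [|apply is_RInt_affine].
  intros x Hx. rewrite Rmin_left, Rmax_right in Hx by lra. rewrite polyline_third by lra. reflexivity. }
assert (K : is_RInt polyline a L beta).
{ replace beta with (plus polyline_head_mass (affine_area w r (L - q))).
  - exact (is_RInt_Chasles polyline a q L _ _ polyline_head_integral Hlast).
  - rewrite <- Htot. unfold plus, affine_area, L; simpl. field. lra. }
apply (is_RInt_gen_at_point (V := R_NormedModule)) in K.
pose proof (is_RInt_gen_Chasles polyline L _ _ K (is_RInt_gen_zero_tail polyline L polyline_after)) as G.
replace beta with (plus beta 0) by (unfold plus; simpl; ring). exact G.
Qed.

Lemma polyline_right_limit : filterlim polyline (at_right a) (locally eta).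
Proof.
apply filterlim_locally. intros eps.
assert (Hp : 0 < Rmin (c - a) (eps / nu)).
{ apply Rmin_case; [lra | apply Rdiv_lt_0_compat; [apply cond_pos | lra]]. }
exists (mkposreal _ Hp). intros y Hy Hay. simpl in Hy.
apply Rabs_lt_between' in Hy.
assert (Hc' : y - a < c - a) by (generalize (Rmin_l (c - a) (eps / nu)); lra).
assert (Hye : y - a < eps / nu) by (generalize (Rmin_r (c - a) (eps / nu)); lra).
apply (Rmult_lt_compat_l nu) in Hye; [|lra].
replace (nu * (eps / nu)) with (pos eps) in Hye by (field; lra).
change (Rabs (polyline y - eta) < eps).
rewrite polyline_first by lra.
replace (eta - nu * (y - a) - eta) with (- (nu * (y - a))) by ring.
rewrite Rabs_Ropp, Rabs_right by nra. exact Hye.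
Qed.

Lemma polyline_right_derivative :
  filterlim (fun x => (polyline x - polyline a) / (x - a)) (at_right a) (locally (- nu)).
Proof.
apply filterlim_ext_loc with (fun _ => - nu); [|apply filterlim_const].
exists (mkposreal (c - a) ltac:(lra)). intros y Hy Hay. simpl in Hy.
apply Rabs_lt_between' in Hy.
rewrite !polyline_first by lra. field. lra.
Qed.

Lemma polyline_feasible (beta : R) : polyline_head_mass + w ^ 2 / (2 * r) = beta ->
  feasible a beta eta nu polyline.
Proof.
intros Htot. split; [|split; [|split; [|split; [|split]]]].
- exact (polyline_total_mass beta Htot).
- rewrite polyline_first by lra. ring.
- exact polyline_right_limit.
- exists (- nu). split; [exact polyline_right_derivative | lra].
- intros x y t _ _ Ht.
  assert (Hconv : convex_R polyline).
  { apply convex_R_max; [intros ? ? ? ?; lra|].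
    repeat apply convex_R_max; apply convex_R_affine. }
  exact (Hconv x y t Ht).
- intros x _. apply Rmax_l.
Qed.

End Polyline.

Section Examples.
Variables (a beta eta nu : R).
Hypotheses (He : 0 < eta) (Hn : 0 < nu) (HM : eta ^ 2 < 2 * beta * nu).

Let mu_pos : 0 < eta / nu.
Proof. apply Rdiv_lt_0_compat; lra. Qed.

Lemma vertex_mass_lt : eta ^ 2 / (2 * nu) < beta.
Proof. apply (Rmult_lt_reg_r (2 * nu)); [lra|]. field_simplify; lra. Qed.

(* Follow the tangent line up to a + t, then continue with the single slope that
   brings the total mass to beta. *)
Lemma tangent_prefix_example (t : R) : 0 < t < eta / nu ->
  exists f, feasible a beta eta nu f /\ is_RInt f a (a + t) (affine_area eta nu t) /\
    (forall x, a + t <= x -> f x <= eta - nu * t).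
Proof.
intros Ht. pose proof vertex_mass_lt.
assert (Hv : 0 < eta - nu * t).
{ destruct Ht as [_ Ht]. apply (Rmult_lt_compat_l nu) in Ht; [|lra].
  replace (nu * (eta / nu)) with eta in Ht by (field; lra). lra. }
set (P := affine_area eta nu t).
assert (HP : P + (eta - nu * t) ^ 2 / (2 * nu) = eta ^ 2 / (2 * nu))
  by (unfold P, affine_area; field; lra).
assert (HP2 : 0 < beta - P).
{ assert (0 <= (eta - nu * t) ^ 2 / (2 * nu)) by (apply Rdiv_le_0_compat; nra). lra. }
set (r := (eta - nu * t) ^ 2 / (2 * (beta - P))).
assert (Hr : 0 < r) by (apply Rdiv_lt_0_compat; [apply pow_lt|]; lra).
assert (Hrn : r <= nu).
{ unfold r. apply (Rmult_le_reg_r (2 * (beta - P))); [lra|].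
  replace ((eta - nu * t) ^ 2 / (2 * (beta - P)) * (2 * (beta - P))) with ((eta - nu * t) ^ 2)
    by (field; lra).
  assert ((eta - nu * t) ^ 2 = 2 * nu * (eta ^ 2 / (2 * nu) - P)) by (rewrite <- HP; field; lra).
  nra. }
assert (Hw : 0 <= eta - nu * (a + t - a) - r * (a + t - (a + t))) by (ring_simplify; lra).
assert (Hhead : polyline_head_mass a eta nu (a + t) r (a + t) = P)
  by (unfold polyline_head_mass, P, affine_area; field).
exists (polyline a eta nu (a + t) r (a + t) r). split; [|split].
- apply polyline_feasible; try lra. rewrite Hhead. unfold r. field. split; [lra|]. nra.
- rewrite <- Hhead. apply polyline_head_integral; lra.
- intros x Hx. eapply Rle_trans; [apply polyline_le_kink; lra|]. right; ring.
Qed.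

(* For every b, the mass on [a, b] can be made arbitrarily close to eta^2 / (2 nu):
   follow the tangent almost up to its zero, then decay very slowly. *)
Lemma mass_near_vertex (b eps : R) : a <= b -> 0 < eps ->
  exists f I, feasible a beta eta nu f /\ is_RInt f a b I /\ I <= eta ^ 2 / (2 * nu) + eps.
Proof.
intros Hab Heps.
assert (Hnb : 0 <= nu * (b - a)) by (apply Rmult_le_pos; lra).
set (del := Rmin (eta / nu / 2) (eps / (nu * (b - a) + 1))).
assert (Hd : 0 < del) by (unfold del; apply Rmin_case; [lra | apply Rdiv_lt_0_compat; lra]).
assert (Hd1 : del <= eta / nu / 2) by apply Rmin_l.
assert (Hd2 : nu * del * (b - a) <= eps).
{ assert (Hd2 : del <= eps / (nu * (b - a) + 1)) by apply Rmin_r.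
  apply (Rmult_le_compat_l (nu * (b - a))) in Hd2; [|lra].
  replace (nu * (b - a) * (eps / (nu * (b - a) + 1)))
    with (eps * (nu * (b - a) / (nu * (b - a) + 1))) in Hd2 by (field; lra).
  assert (nu * (b - a) / (nu * (b - a) + 1) <= 1).
  { apply (Rmult_le_reg_r (nu * (b - a) + 1)); [lra|]. field_simplify; lra. }
  nra. }
set (t := eta / nu - del).
destruct (tangent_prefix_example t ltac:(unfold t; lra)) as [f [Hf [Hhead Hbound]]].
destruct (feasible_integrable a beta eta nu f Hf b Hab) as [I HI].
exists f, I. split; [exact Hf|]. split; [exact HI|].
assert (Harea : affine_area eta nu t = eta ^ 2 / (2 * nu) - nu * del ^ 2 / 2)
  by (unfold affine_area, t; field; lra).
assert (0 <= nu * del ^ 2 / 2) by (apply Rmult_le_pos; [nra | lra]).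
destruct (Rle_dec (a + t) b) as [Hbt|Hbt].
- assert (Ht0 : a <= a + t) by (unfold t; lra).
  pose proof (is_RInt_le_after_prefix f a (a + t) b _ _ I (conj Ht0 Hbt) Hhead Hbound HI) as K.
  replace (eta - nu * t) with (nu * del) in K by (unfold t; field; lra).
  assert (nu * del * (b - (a + t)) <= nu * del * (b - a))
    by (apply Rmult_le_compat_l; [nra | unfold t; lra]).
  lra.
- destruct (is_RInt_split f a b (a + t) _ ltac:(lra) Hhead) as [I1 [HI1 HI2]].
  assert (I1 = I) by (rewrite <- (is_RInt_unique _ _ _ _ HI1); exact (is_RInt_unique _ _ _ _ HI)).
  destruct Hf as [_ [_ [_ [_ [_ Hpos]]]]].
  assert (0 * (a + t - b) <= affine_area eta nu t - I1)
    by (apply (is_RInt_ge_const f b (a + t)); auto; [lra | intros; apply Hpos; lra]).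
  lra.
Qed.

(* The mass eta^2 / (2 nu) can already be collected on [a, a + eta/nu - del] for
   small del > 0: bend to slope -3nu/4 at a + eta/nu - 3 del. *)
Lemma vertex_mass_early (del : R) : 0 < del -> del <= eta / nu / 4 -> del <= 1 ->
  del <= 2 * (beta - eta ^ 2 / (2 * nu)) / (3 * nu) ->
  exists f, feasible a beta eta nu f /\
    is_RInt f a (a + eta / nu - del) (eta ^ 2 / (2 * nu)).
Proof.
intros Hd Hd1 Hd2 Hd3. pose proof vertex_mass_lt.
set (c := a + (eta / nu - 3 * del)).
set (s := 3 * nu / 4).
set (q := a + eta / nu - del).
set (r := (3 * nu * del / 2) ^ 2 / (2 * (beta - eta ^ 2 / (2 * nu)))).
assert (Hw : eta - nu * (c - a) - s * (q - c) = 3 * nu * del / 2) by (unfold c, s, q; field; lra).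
assert (Hr : 0 < r) by (apply Rdiv_lt_0_compat; [apply pow_lt; nra | lra]).
assert (Hrs : r <= s).
{ unfold r, s. apply (Rmult_le_reg_r (2 * (beta - eta ^ 2 / (2 * nu)))); [lra|].
  replace ((3 * nu * del / 2) ^ 2 / (2 * (beta - eta ^ 2 / (2 * nu))) * (2 * (beta - eta ^ 2 / (2 * nu))))
    with (9 * nu ^ 2 * del ^ 2 / 4) by (field; lra).
  apply (Rmult_le_compat_l (3 * nu)) in Hd3; [|lra].
  replace (3 * nu * (2 * (beta - eta ^ 2 / (2 * nu)) / (3 * nu)))
    with (2 * (beta - eta ^ 2 / (2 * nu))) in Hd3 by (field; lra).
  assert (del ^ 2 <= del) by nra. nra. }
assert (Hhead : polyline_head_mass a eta nu c s q = eta ^ 2 / (2 * nu))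
  by (unfold polyline_head_mass, affine_area, c, s, q; field; lra).
assert (Hw0 : 0 <= eta - nu * (c - a) - s * (q - c)) by (rewrite Hw; nra).
assert (Hac : a < c) by (unfold c; lra).
assert (Hcq : c <= q) by (unfold c, q; lra).
assert (Hsn : s <= nu) by (unfold s; lra).
exists (polyline a eta nu c s q r). split.
- apply polyline_feasible; try assumption.
  rewrite Hw, Hhead. unfold r. field. split; [lra | nra].
- rewrite <- Hhead. apply polyline_head_integral; assumption.
Qed.

(* A polyline with kinks at a + t1 and a + D (t1 determined by the data) carrying mass
   T on [a, a + D], value w at a + D and final slope -r, provided the slopes come out
   ordered (the quadratic condition on r) and the total mass is beta. *)
Lemma polyline_with_mass (T D w r : R) : 0 < 2 * nu * T - eta ^ 2 -> 0 < D ->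
  eta < nu * D -> 2 * T < eta * D -> 0 <= w -> 0 < r ->
  r * (nu * D ^ 2 - 2 * eta * D + 2 * T)
    <= 2 * nu * T - eta ^ 2 + 2 * eta * w - 2 * nu * w * D - w ^ 2 ->
  T + w ^ 2 / (2 * r) = beta ->
  exists f, feasible a beta eta nu f /\ is_RInt f a (a + D) T.
Proof.
intros HK HD HD1 HD2 Hw Hr Hrs Htot.
set (E := nu * D + w - eta).
set (G := nu * D ^ 2 - 2 * eta * D + 2 * T).
set (Nn := 2 * nu * T - eta ^ 2 + 2 * eta * w - 2 * nu * w * D - w ^ 2).
assert (HE : 0 < E) by (unfold E; lra).
assert (HG : 0 < G).
{ assert (nu * G = (nu * D - eta) ^ 2 + (2 * nu * T - eta ^ 2)) by (unfold G; ring). nra. }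
set (t1 := ((eta + w) * D - 2 * T) / E).
set (s := Nn / G).
assert (Ht1 : 0 < t1) by (apply Rdiv_lt_0_compat; nra).
assert (HDt : a + D - (a + t1) = G / E) by (unfold t1, G, E; field; lra).
assert (HDt' : 0 < G / E) by (apply Rdiv_lt_0_compat; lra).
assert (Hrs' : r <= s).
{ unfold s. apply (Rmult_le_reg_r G); [lra|]. replace (Nn / G * G) with Nn by (field; lra). exact Hrs. }
assert (Hsn : s <= nu).
{ unfold s. apply (Rmult_le_reg_r G); [lra|]. replace (Nn / G * G) with Nn by (field; lra).
  assert (nu * G - Nn = (nu * D - eta + w) ^ 2) by (unfold G, Nn; ring). nra. }
assert (Hwf : eta - nu * (a + t1 - a) - s * (a + D - (a + t1)) = w).
{ rewrite HDt. unfold s, t1, Nn, G, E. field. split; [unfold E in HE | unfold G in HG]; lra. }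
assert (Hhead : polyline_head_mass a eta nu (a + t1) s (a + D) = T).
{ unfold polyline_head_mass, affine_area. rewrite HDt. replace (a + t1 - a) with t1 by ring.
  unfold s, t1, Nn, G, E. field. split; [unfold E in HE | unfold G in HG]; lra. }
assert (Hw0 : 0 <= eta - nu * (a + t1 - a) - s * (a + D - (a + t1))) by (rewrite Hwf; exact Hw).
exists (polyline a eta nu (a + t1) s (a + D) r). split.
- apply polyline_feasible; try lra; try exact Hw0. rewrite Hwf, Hhead. exact Htot.
- rewrite <- Hhead. apply polyline_head_integral; try lra; exact Hw0.
Qed.

Lemma long_horizon (T X N : R) : 0 < T -> exists D, N <= a + D /\ 1 <= D /\ X <= D /\
  eta < nu * D /\ 2 * T < eta * D /\ 2 * T <= nu * D ^ 2.
Proof.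
intros HT. pose proof mu_pos.
assert (Heta : 0 < 2 * T / eta) by (apply Rdiv_lt_0_compat; lra).
assert (Hnu : 0 < 2 * T / nu) by (apply Rdiv_lt_0_compat; lra).
pose proof (RRle_abs (N - a)). pose proof (RRle_abs X).
pose proof (Rabs_pos (N - a)). pose proof (Rabs_pos X).
set (D := 1 + Rabs (N - a) + Rabs X + eta / nu + 2 * T / eta + 2 * T / nu).
assert (E1 : eta = nu * (eta / nu)) by (field; lra).
assert (E2 : 2 * T = eta * (2 * T / eta)) by (field; lra).
assert (E3 : 2 * T = nu * (2 * T / nu)) by (field; lra).
assert (HD1 : eta / nu < D) by (unfold D; lra).
assert (HD2 : 2 * T / eta < D) by (unfold D; lra).
assert (HD3 : 2 * T / nu < D) by (unfold D; lra).
assert (HD : 1 <= D) by (unfold D; lra).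
exists D. split; [unfold D; lra|]. split; [exact HD|]. split; [unfold D; lra|].
split; [nra|]. split; [nra|].
assert (0 <= nu * (D ^ 2 - D)) by (apply Rmult_le_pos; nra). nra.
Qed.

Lemma slow_tail_condition (T D k R0 : R) : 0 < k -> k <= R0 ->
  4 * nu * k <= 2 * nu * T - eta ^ 2 -> 4 * k <= D * (2 * nu * T - eta ^ 2) ->
  k <= D -> 2 * T < eta * D ->
  (k / D) ^ 2 / (2 * R0) * (nu * D ^ 2 - 2 * eta * D + 2 * T)
    <= 2 * nu * T - eta ^ 2 + 2 * eta * (k / D) - 2 * nu * (k / D) * D - (k / D) ^ 2.
Proof.
intros Hk0 Hk2 Hk1 HkD HXD HD2.
set (K := 2 * nu * T - eta ^ 2) in *.
assert (HD : 0 < D) by lra.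
set (w := k / D). set (r := w ^ 2 / (2 * R0)).
assert (HwD : w * D = k) by (unfold w; field; lra).
assert (Hw0 : 0 < w) by (apply Rdiv_lt_0_compat; lra).
assert (Hw1 : w <= 1) by nra.
assert (Hw2 : w <= K / 4) by nra.
assert (Hr0 : 0 < r) by (apply Rdiv_lt_0_compat; [apply pow_lt|]; lra).
assert (HG : nu * D ^ 2 - 2 * eta * D + 2 * T <= 2 * nu * D ^ 2) by nra.
assert (HrD : r * (2 * nu * D ^ 2) = nu * k ^ 2 / R0) by (unfold r; rewrite <- HwD; field; lra).
assert (Hk4 : nu * k ^ 2 / R0 <= K / 4).
{ apply (Rmult_le_reg_r R0); [lra|].
  replace (nu * k ^ 2 / R0 * R0) with (nu * k ^ 2) by (field; lra). nra. }
assert (r * (nu * D ^ 2 - 2 * eta * D + 2 * T) <= r * (2 * nu * D ^ 2))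
  by (apply Rmult_le_compat_l; lra).
assert (2 * nu * w * D = 2 * nu * k) by (rewrite <- HwD; ring).
assert (w ^ 2 <= K / 4) by nra.
assert (0 <= 2 * eta * w) by nra.
lra.
Qed.

(* Masses T strictly between eta^2 / (2 nu) and beta are reached arbitrarily late:
   a long, almost flat tail of small height w and tiny final slope r. *)
Lemma mass_far_below_total (T N : R) : eta ^ 2 / (2 * nu) < T < beta ->
  exists q, N <= q /\ a <= q /\ exists f, feasible a beta eta nu f /\ is_RInt f a q T.
Proof.
intros [HT HTb].
set (K := 2 * nu * T - eta ^ 2).
assert (HK : 0 < K).
{ apply (Rmult_lt_compat_l (2 * nu)) in HT; [|lra].
  replace (2 * nu * (eta ^ 2 / (2 * nu))) with (eta ^ 2) in HT by (field; lra). unfold K; lra. }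
assert (HT0 : 0 < T) by (assert (0 <= eta ^ 2 / (2 * nu)) by (apply Rdiv_le_0_compat; nra); lra).
set (R0 := beta - T).
set (k := Rmin (K / (4 * nu)) R0).
assert (Hk0 : 0 < k) by (unfold k, R0; apply Rmin_case; [apply Rdiv_lt_0_compat |]; lra).
assert (Hk1 : 4 * nu * k <= K).
{ assert (Hk : k <= K / (4 * nu)) by apply Rmin_l.
  apply (Rmult_le_compat_l (4 * nu)) in Hk; [|lra].
  replace (4 * nu * (K / (4 * nu))) with K in Hk by (field; lra). lra. }
assert (Hk2 : k <= R0) by apply Rmin_r.
assert (Hk3 : 0 < 4 * k / K) by (apply Rdiv_lt_0_compat; lra).
destruct (long_horizon T (k + 4 * k / K) N HT0) as [D [HN [HD [HX [HD1 [HD2 _]]]]]].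
assert (HkD : 4 * k <= D * K) by (replace (4 * k) with ((4 * k / K) * K) by (field; lra); nra).
set (w := k / D).
assert (Hw0 : 0 < w) by (apply Rdiv_lt_0_compat; lra).
destruct (polyline_with_mass T D w (w ^ 2 / (2 * R0)) HK ltac:(lra) HD1 HD2 ltac:(lra)
  ltac:(apply Rdiv_lt_0_compat; [apply pow_lt | unfold R0]; lra)) as [f [Hf HI]].
- apply slow_tail_condition; unfold K in *; lra.
- assert (w ^ 2 <> 0) by (apply pow_nonzero; lra).
  replace (w ^ 2 / (2 * (w ^ 2 / (2 * R0)))) with R0 by (field; split; [|unfold R0]; lra).
  unfold R0; ring.
- exists (a + D). split; [lra|]. split; [lra|]. now exists f.
Qed.

Lemma mass_far_total (N : R) :
  exists q, N <= q /\ a <= q /\ exists f, feasible a beta eta nu f /\ is_RInt f a q beta.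
Proof.
pose proof vertex_mass_lt as HMl.
set (K := 2 * nu * beta - eta ^ 2).
assert (HK : 0 < K) by (unfold K; lra).
assert (Hb0 : 0 < beta) by (assert (0 <= eta ^ 2 / (2 * nu)) by (apply Rdiv_le_0_compat; nra); lra).
destruct (long_horizon beta 0 N Hb0) as [D [HN [HD [_ [HD1 [HD2 _]]]]]].
set (G := nu * D ^ 2 - 2 * eta * D + 2 * beta).
assert (HG : 0 < G).
{ assert (nu * G = (nu * D - eta) ^ 2 + K) by (unfold G, K; ring). nra. }
assert (Hr0 : 0 < K / G) by (apply Rdiv_lt_0_compat; lra).
destruct (polyline_with_mass beta D 0 (K / G) HK ltac:(lra) HD1 HD2 ltac:(lra) Hr0) as [f [Hf HI]].
- right. fold G. unfold K. field. lra.
- field. split; lra.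
- exists (a + D). split; [lra|]. split; [lra|]. now exists f.
Qed.

End Examples.

Section TailValue.
Variables (a beta eta nu : R).
Hypotheses (He : 0 < eta) (Hn : 0 < nu) (HM : eta ^ 2 < 2 * beta * nu).

Lemma feasible_exists : exists f, feasible a beta eta nu f.
Proof.
assert (0 < eta / nu) by (apply Rdiv_lt_0_compat; lra).
destruct (tangent_prefix_example a beta eta nu Hn HM (eta / nu / 2) ltac:(lra)) as [f [Hf _]].
now exists f.
Qed.

Lemma feasible_tail (f : R -> R) (b v : R) : a <= b -> feasible a beta eta nu f ->
  is_RInt_gen f (at_point b) (Rbar_locally p_infty) v ->
  exists I, is_RInt f a b I /\ v = beta - I.
Proof.
intros Hab Hf Hv. destruct (feasible_integrable a beta eta nu f Hf b Hab) as [I HI].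
exists I. split; [exact HI|]. destruct Hf as [Hint _].
exact (is_RInt_gen_uniq f b v (beta - I) Hv (is_RInt_gen_tail f a b beta I Hint HI)).
Qed.

(* Before the zero of the tangent line, the tangent itself is optimal:
   z*(a, b) = beta - affine_area eta nu (b - a). *)
Lemma zstar_before_vertex (b : R) : a <= b < a + eta / nu ->
  zstar a beta eta nu b = Finite (beta - affine_area eta nu (b - a)).
Proof.
intros Hab. apply is_lub_Rbar_unique. split.
- intros v [f [Hf Hv]]. destruct (feasible_tail f b v ltac:(lra) Hf Hv) as [I [HI ->]].
  simpl. pose proof (feasible_mass_ge_tangent a beta eta nu f Hf b I ltac:(lra) HI). lra.
- intros u Hu. apply Hu.
  assert (Hex : exists f, feasible a beta eta nu f /\ is_RInt f a b (affine_area eta nu (b - a))).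
  { destruct (Req_dec b a) as [->|Hba].
    - destruct feasible_exists as [f Hf]. exists f. split; [exact Hf|].
      replace (affine_area eta nu (a - a)) with 0 by (unfold affine_area; field).
      apply (is_RInt_point (V := R_NormedModule)).
    - destruct (tangent_prefix_example a beta eta nu Hn HM (b - a) ltac:(lra)) as [f [Hf [H1 _]]].
      exists f. split; [exact Hf|]. replace b with (a + (b - a)) at 1 by ring. exact H1. }
  destruct Hex as [f [Hf HI]]. exists f. split; [exact Hf|].
  destruct Hf as [Hint _]. exact (is_RInt_gen_tail f a b beta _ Hint HI).
Qed.

(* Beyond it, masses on [a, b] arbitrarily close to eta^2 / (2 nu) are possible,
   so z*(a, b) = beta - eta^2 / (2 nu). *)
Lemma zstar_after_vertex (b : R) : a + eta / nu <= b ->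
  zstar a beta eta nu b = Finite (beta - eta ^ 2 / (2 * nu)).
Proof.
intros Hab. assert (0 < eta / nu) by (apply Rdiv_lt_0_compat; lra).
apply is_lub_Rbar_unique, is_lub_Rbar_approx.
- intros v [f [Hf Hv]]. destruct (feasible_tail f b v ltac:(lra) Hf Hv) as [I [HI ->]].
  pose proof (feasible_mass_ge_vertex a beta eta nu f Hf He Hn b I Hab HI). lra.
- intros eps Heps.
  destruct (mass_near_vertex a beta eta nu He Hn HM b eps ltac:(lra) Heps) as [f [I [Hf [HI Hle]]]].
  exists (beta - I). split; [|lra].
  exists f. split; [exact Hf|]. destruct Hf as [Hint _]. exact (is_RInt_gen_tail f a b beta _ Hint HI).
Qed.

End TailValue.

Section QuantileProblem.
Variables (a beta eta nu p : R).
Hypotheses (He : 0 < eta) (Hn : 0 < nu) (HM : eta ^ 2 < 2 * beta * nu)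
  (Hp : 1 - beta <= p <= 1).

(* T is the mass required on [a, q]; ts is the offset of the closed-form quantile. *)
Let T := p - (1 - beta).
Let Mv := eta ^ 2 / (2 * nu).
Let ts := eta / nu - sqrt ((eta / nu) ^ 2 - 2 * beta / nu + 2 * (1 - p) / nu).

Let mu_pos : 0 < eta / nu.
Proof. apply Rdiv_lt_0_compat; lra. Qed.

Lemma offset_spec : T <= Mv -> 0 <= ts <= eta / nu /\ affine_area eta nu ts = T /\
  (T < Mv -> ts < eta / nu) /\ (T = Mv -> ts = eta / nu).
Proof.
intros HT.
set (X := (eta / nu) ^ 2 - 2 * beta / nu + 2 * (1 - p) / nu).
assert (HX : X = (eta ^ 2 - 2 * nu * T) / nu ^ 2) by (unfold X, T; field; lra).
assert (HK : 2 * nu * T <= eta ^ 2).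
{ apply (Rmult_le_compat_l (2 * nu)) in HT; [|lra].
  replace (2 * nu * Mv) with (eta ^ 2) in HT by (unfold Mv; field; lra). lra. }
assert (HX0 : 0 <= X) by (rewrite HX; apply Rdiv_le_0_compat; [lra | nra]).
set (S := sqrt X).
assert (HS : S * S = X) by (apply sqrt_sqrt; exact HX0).
assert (HS0 : 0 <= S) by apply sqrt_pos.
assert (HT0 : 0 <= T) by (unfold T; lra).
assert (HXmu : X = (eta / nu) ^ 2 - 2 * T / nu) by (rewrite HX; field; lra).
assert (0 <= 2 * T / nu) by (apply Rdiv_le_0_compat; lra).
assert (HSm : S <= eta / nu) by nra.
unfold ts. fold X. fold S.
split; [lra|]. split; [|split].
- unfold affine_area.
  replace (eta * (eta / nu - S) - nu * (eta / nu - S) ^ 2 / 2)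
    with (nu / 2 * ((eta / nu) ^ 2 - S * S)) by (field; lra).
  rewrite HS, HXmu. field. lra.
- intros HT'.
  assert (2 * nu * T < eta ^ 2).
  { apply (Rmult_lt_compat_l (2 * nu)) in HT'; [|lra].
    replace (2 * nu * Mv) with (eta ^ 2) in HT' by (unfold Mv; field; lra). lra. }
  assert (0 < X) by (rewrite HX; apply Rdiv_lt_0_compat; nra).
  assert (0 < S) by (apply sqrt_lt_R0; assumption). lra.
- intros HT'. assert (HX1 : X = 0) by (rewrite HX, HT'; unfold Mv; field; lra).
  unfold S. rewrite HX1, sqrt_0. ring.
Qed.

Lemma qstar_root : T <= Mv -> qstar a beta eta nu p = Finite (a + ts).
Proof.
intros HT. destruct (offset_spec HT) as [[Ht0 Htm] [Harea _]].
apply is_glb_Rbar_unique. split.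
- intros b [Hab Hz]. simpl. destruct (Rle_dec (a + ts) b) as [?|Hc]; [assumption|]. exfalso.
  rewrite zstar_before_vertex in Hz by lra. injection Hz as Hz.
  pose proof (affine_area_increasing eta nu (b - a) ts Hn ltac:(lra) ltac:(lra) Htm).
  unfold T in Harea. lra.
- intros l Hl. apply Hl. split; [lra|].
  destruct (Rlt_dec ts (eta / nu)) as [Hlt|Hge].
  + rewrite zstar_before_vertex by lra. replace (a + ts - a) with ts by ring.
    rewrite Harea. unfold T. f_equal; ring.
  + rewrite zstar_after_vertex by lra. replace ts with (eta / nu) in Harea by lra.
    rewrite affine_area_vertex in Harea by lra. unfold T in Harea. f_equal; lra.
Qed.

(* Otherwise z*(a, b) never drops to 1 - p, and q* is the infimum of the empty set. *)
Lemma qstar_infinite : Mv < T -> qstar a beta eta nu p = p_infty.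
Proof.
intros HT. apply is_glb_Rbar_unique. split; [|intros [l| |] _; simpl; auto].
intros b [Hab Hz]. exfalso.
destruct (Rlt_dec b (a + eta / nu)) as [Hlt|Hge].
- rewrite zstar_before_vertex in Hz by lra. injection Hz as Hz.
  pose proof (affine_area_le_vertex eta nu (b - a) Hn). unfold Mv, T in *. lra.
- rewrite zstar_after_vertex in Hz by lra. injection Hz as Hz. unfold Mv, T in *. lra.
Qed.

(* Below the vertex mass, the tangent is the slowest feasible growth of the mass:
   the largest quantile is a + ts. *)
Lemma quantile_root : T < Mv -> quantile_value a beta eta nu p = Finite (a + ts).
Proof.
intros HT. destruct (offset_spec (Rlt_le _ _ HT)) as [[Ht0 Htm] [Harea [Hlt _]]].
specialize (Hlt HT).
apply is_lub_Rbar_unique. split.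
- intros q [Haq [f [Hf HI]]]. simpl. destruct (Rle_dec q (a + ts)) as [?|Hc]; [assumption|].
  exfalso. destruct (Rle_dec q (a + eta / nu)) as [Hq|Hq].
  + pose proof (feasible_mass_ge_tangent a beta eta nu f Hf q _ ltac:(lra) HI).
    pose proof (affine_area_increasing eta nu ts (q - a) Hn Ht0 ltac:(lra) ltac:(lra)).
    unfold T in Harea. lra.
  + pose proof (feasible_mass_ge_vertex a beta eta nu f Hf He Hn q _ ltac:(lra) HI).
    unfold Mv, T in *. lra.
- intros u Hu. apply Hu. split; [lra|].
  destruct (Req_dec ts 0) as [Z|Z].
  + destruct (feasible_exists a beta eta nu He Hn HM) as [f Hf]. exists f. split; [exact Hf|].
    rewrite Z, Rplus_0_r. replace (p - (1 - beta)) with 0.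
    * apply (is_RInt_point (V := R_NormedModule)).
    * rewrite Z in Harea. unfold affine_area, T in Harea. lra.
  + destruct (tangent_prefix_example a beta eta nu Hn HM ts ltac:(lra)) as [f [Hf [H1 _]]].
    exists f. split; [exact Hf|]. unfold T in Harea. rewrite <- Harea. exact H1.
Qed.

(* At the vertex mass the quantile a + eta / nu itself is not attained (unless the
   whole mass sits before it), but is approached by bending the tangent early. *)
Lemma quantile_vertex : T = Mv -> quantile_value a beta eta nu p = Finite (a + eta / nu).
Proof.
intros HT. pose proof (vertex_mass_lt beta eta nu Hn HM) as HMl.
apply is_lub_Rbar_unique, is_lub_Rbar_approx.
- intros q [Haq [f [Hf HI]]]. destruct (Rle_dec q (a + eta / nu)) as [?|Hc]; [assumption|].
  exfalso.
  pose proof (feasible_mass_gt_vertex a beta eta nu f Hf He Hn q _ ltac:(lra) HI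
    ltac:(unfold T, Mv in *; lra)).
  unfold T, Mv in *. lra.
- intros eps Heps.
  set (K := 2 * (beta - Mv) / (3 * nu)).
  assert (HK : 0 < K) by (apply Rdiv_lt_0_compat; unfold Mv in *; lra).
  assert (Hm0 : 0 < Rmin (Rmin eps 1) (Rmin (eta / nu / 4) K))
    by (repeat apply Rmin_glb_lt; lra).
  pose proof (Rmin_l (Rmin eps 1) (Rmin (eta / nu / 4) K)).
  pose proof (Rmin_r (Rmin eps 1) (Rmin (eta / nu / 4) K)).
  pose proof (Rmin_l eps 1). pose proof (Rmin_r eps 1).
  pose proof (Rmin_l (eta / nu / 4) K). pose proof (Rmin_r (eta / nu / 4) K).
  set (m := Rmin (Rmin eps 1) (Rmin (eta / nu / 4) K)) in *.
  destruct (vertex_mass_early a beta eta nu Hn HM m Hm0 ltac:(lra) ltac:(lra) ltac:(unfold K, Mv in *; lra))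
    as [f [Hf HI]].
  exists (a + eta / nu - m). split; [|lra].
  split; [lra|]. exists f. split; [exact Hf|].
  replace (p - (1 - beta)) with (eta ^ 2 / (2 * nu)) by (unfold T, Mv in HT; lra). exact HI.
Qed.

(* Beyond the vertex mass, the mass T can be collected arbitrarily late. *)
Lemma quantile_infinite : Mv < T -> quantile_value a beta eta nu p = p_infty.
Proof.
intros HT. apply is_lub_Rbar_unique, is_lub_Rbar_unbounded. intros N.
assert (Hfar : exists q, N <= q /\ a <= q /\
  (exists f, feasible a beta eta nu f /\ is_RInt f a q (p - (1 - beta)))).
{ destruct (Rlt_dec T beta) as [Hlt|Hge].
  - apply (mass_far_below_total a beta eta nu He Hn). unfold Mv, T in *. lra.
  - replace (p - (1 - beta)) with beta by (unfold T in *; lra).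
    exact (mass_far_total a beta eta nu He Hn HM N). }
destruct Hfar as [q [HNq HQ]]. now exists q.
Qed.

End QuantileProblem.

Theorem theorem4 (a beta eta nu p : R) :
  0 < beta -> 0 < eta -> 0 < nu -> eta ^ 2 < 2 * beta * nu ->
  1 - beta <= p <= 1 ->
  let mu := eta / nu in
  let sigma := 2 * beta / nu in
  qstar a beta eta nu p = quantile_value a beta eta nu p /\
  qstar a beta eta nu p =
    (if Rle_dec p (1 - beta + eta ^ 2 / (2 * nu))
     then Finite (a + mu - sqrt (mu ^ 2 - sigma + 2 * (1 - p) / nu))
     else p_infty).
Proof.
intros _ He Hn HM Hp mu sigma. unfold mu, sigma.
destruct (Rle_dec p (1 - beta + eta ^ 2 / (2 * nu))) as [Hle|Hgt].
- assert (HT : p - (1 - beta) <= eta ^ 2 / (2 * nu)) by lra.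
  rewrite (qstar_root a beta eta nu p He Hn HM Hp HT).
  split; [|f_equal; ring].
  destruct (Rlt_dec (p - (1 - beta)) (eta ^ 2 / (2 * nu))) as [Hlt|Hge].
  + now rewrite (quantile_root a beta eta nu p He Hn HM Hp Hlt).
  + assert (Heq : p - (1 - beta) = eta ^ 2 / (2 * nu)) by lra.
    rewrite (quantile_vertex a beta eta nu p He Hn HM Heq).
    destruct (offset_spec beta eta nu p He Hn Hp HT) as [_ [_ [_ Hvertex]]].
    rewrite (Hvertex Heq). reflexivity.
- assert (HT : eta ^ 2 / (2 * nu) < p - (1 - beta)) by lra.
  rewrite (qstar_infinite a beta eta nu p He Hn HM HT).
  rewrite (quantile_infinite a beta eta nu p He Hn HM Hp HT). now split.
Qed.
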